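(* Let $n<\omega$, let $L\in\mathbf{M}_n$ and let $P$ be its dual $pm$-space. Then every order component of $P$ is a closed subset of $P$.
   Context: $\mathbf{M}_n$ is the variety of regular pseudocomplemented de Morgan algebras of range $n$: algebras $(L;\wedge,\vee,{}^\ast,{}^\prime,0,1)$ with bounded distributive lattice reduct, pseudocomplement ${}^\ast$, de Morgan involution ${}^\prime$, satisfying $x\wedge x^{\prime\ast\prime}\le y\vee y^\ast$ (regularity) and $(x\wedge x^{\prime\ast})^{n(\prime\ast)}=(x\wedge x^{\prime\ast})^{(n+1)(\prime\ast)}$, where $x^{0(\prime\ast)}=x$, $x^{(k+1)(\prime\ast)}=((x^{k(\prime\ast)})')^\ast$. The dual $pm$-space is the Priestley space $(P;\tau,\le)$ of prime ideals with the involution $\zeta(I)=\{a:a'\notin I\}$. An order component of $P$ is a maximal subset any two elements of which are joined by a finite path in the comparability graph of $(P;\le)$. *)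

From Stdlib Require Import List Relations.
Import ListNotations.

Record pmAlg := PmAlg {
  car :> Type;
  mt : car -> car -> car;
  jn : car -> car -> car;
  st : car -> car;
  dm : car -> car;
  zero : car;
  one : car;
  mtA : forall x y z, mt x (mt y z) = mt (mt x y) z;
  jnA : forall x y z, jn x (jn y z) = jn (jn x y) z;
  mtC : forall x y, mt x y = mt y x;
  jnC : forall x y, jn x y = jn y x;
  mtJ : forall x y, mt x (jn x y) = x;
  jnM : forall x y, jn x (mt x y) = x;
  mtDr : forall x y z, mt x (jn y z) = jn (mt x y) (mt x z);
  jn0 : forall x, jn x zero = x;
  mt1 : forall x, mt x one = x;
  stP : forall a x, mt a x = zero <-> mt x (st a) = x;
  dmK : forall x, dm (dm x) = x;
  dmM : forall x y, dm (mt x y) = jn (dm x) (dm y)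
}.

Definition le (A : pmAlg) (x y : A) : Prop := mt A x y = x.

Definition iter_dmst (A : pmAlg) (k : nat) (x : A) : A :=
  Nat.iter k (fun z => st A (dm A z)) x.

Definition in_Mn (n : nat) (A : pmAlg) : Prop :=
  (forall x y : A,
     le A (mt A x (dm A (st A (dm A x)))) (jn A y (st A y)))
  /\
  (forall x : A,
     iter_dmst A n (mt A x (st A (dm A x)))
     = iter_dmst A (S n) (mt A x (st A (dm A x)))).

Definition prime_ideal (A : pmAlg) (I : A -> Prop) : Prop :=
  I (zero A)
  /\ (forall a b : A, I b -> le A a b -> I a)
  /\ (forall a b : A, I a -> I b -> I (jn A a b))
  /\ ~ I (one A)
  /\ (forall a b : A, I (mt A a b) -> I a \/ I b).

Definition Point (A : pmAlg) := { I : A -> Prop | prime_ideal A I }.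

Definition pt_le (A : pmAlg) (p q : Point A) : Prop :=
  forall a, proj1_sig p a -> proj1_sig q a.

Definition Xa (A : pmAlg) (a : A) (p : Point A) : Prop := ~ proj1_sig p a.

(* subbasic sets of the Priestley topology: X_a (true) and P \ X_a (false) *)
Definition subbasic (A : pmAlg) (ab : A * bool) (p : Point A) : Prop :=
  if snd ab then Xa A (fst ab) p else ~ Xa A (fst ab) p.

Definition is_open (A : pmAlg) (U : Point A -> Prop) : Prop :=
  forall p, U p ->
    exists l : list (A * bool),
      Forall (fun ab => subbasic A ab p) l
      /\ (forall q, Forall (fun ab => subbasic A ab q) l -> U q).

Definition is_closed (A : pmAlg) (C : Point A -> Prop) : Prop :=
  is_open A (fun p => ~ C p).

Definition comparable (A : pmAlg) (p q : Point A) : Prop :=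
  pt_le A p q \/ pt_le A q p.

Definition path_connected (A : pmAlg) : Point A -> Point A -> Prop :=
  clos_refl_trans (Point A) (comparable A).

Definition order_component (A : pmAlg) (C : Point A -> Prop) : Prop :=
  (forall p q, C p -> C q -> path_connected A p q)
  /\ (forall D : Point A -> Prop,
        (forall p, C p -> D p) ->
        (forall p q, D p -> D q -> path_connected A p q) ->
        forall p, D p -> C p).

(* The pm-space P carries, besides its order, the order-reversing involution zeta, and every
   comparability path in P from a point p can be straightened into a "zeta-chain"
   p >= v0, zeta v1 <= v0, zeta v2 <= v1, ...  The points reached by chains of length k+1 form
   the closed set of prime ideals containing the ideal generated by chi^k[zeta p], where
   chi x = (x')^*.  The range-n identity of M_n forces these sets to stabilise: every point
   reached in n+3 steps lies below a point reached in n+1 or n+2 steps, hence every point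
   reached at all is reached in n+2 or n+3 steps.  Points reached in the same number of steps
   are joined by a path, so each of these two closed sets lies inside or outside a given order
   component, which is therefore the union of at most two closed sets. *)

From Stdlib Require Import List Relations Classical Arith Lia.
From mathcomp Require classical_sets.
Set Bullet Behavior "Strict Subproofs".

Local Notation "x ⊓ y" := (mt _ x y) (at level 40, left associativity).
Local Notation "x ⊔ y" := (jn _ x y) (at level 50, left associativity).
Local Notation "x ≤ y" := (le _ x y) (at level 70).
Local Notation "a ∈ u" := (proj1_sig u a) (at level 70).

Section Lattice.

Variable L : pmAlg.
Implicit Types a b c x y z : L.

Lemma mt_idem x : x ⊓ x = x.
Proof. transitivity (x ⊓ (x ⊔ (x ⊓ x))); [now rewrite jnM | apply mtJ]. Qed.

Lemma le_refl x : x ≤ x.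
Proof. apply mt_idem. Qed.

Lemma le_trans x y z : x ≤ y -> y ≤ z -> x ≤ z.
Proof. unfold le; intros Hxy Hyz. now rewrite <- Hxy, <- mtA, Hyz. Qed.

Lemma le_jn x y : x ≤ y <-> x ⊔ y = y.
Proof.
  unfold le; split; intros H.
  - now rewrite <- H, jnC, mtC, jnM.
  - now rewrite <- H, mtJ.
Qed.

Lemma le_mt_l x y : x ⊓ y ≤ x.
Proof. unfold le. now rewrite (mtC L (x ⊓ y) x), mtA, mt_idem. Qed.

Lemma le_mt_r x y : x ⊓ y ≤ y.
Proof. unfold le. now rewrite <- mtA, mt_idem. Qed.

Lemma mt_glb x y z : z ≤ x -> z ≤ y -> z ≤ x ⊓ y.
Proof. unfold le; intros Hx Hy. now rewrite mtA, Hx, Hy. Qed.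

Lemma le_jn_l x y : x ≤ x ⊔ y.
Proof. apply mtJ. Qed.

Lemma le_jn_r x y : y ≤ x ⊔ y.
Proof. rewrite jnC. apply mtJ. Qed.

Lemma jn_lub x y z : x ≤ z -> y ≤ z -> x ⊔ y ≤ z.
Proof. rewrite !le_jn; intros Hx Hy. now rewrite <- jnA, Hy, Hx. Qed.

Lemma jn_mono a b c d : a ≤ b -> c ≤ d -> a ⊔ c ≤ b ⊔ d.
Proof.
  intros Hab Hcd. apply jn_lub.
  - apply le_trans with b; [exact Hab | apply le_jn_l].
  - apply le_trans with d; [exact Hcd | apply le_jn_r].
Qed.

Lemma le0 x : zero L ≤ x.
Proof. apply le_jn. now rewrite jnC, jn0. Qed.

Lemma le_one x : one L ≤ x -> x = one L.
Proof. unfold le. now rewrite mtC, mt1. Qed.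

Lemma le_zero x : x ≤ zero L -> x = zero L.
Proof. intros H. rewrite <- H, mtC. apply le0. Qed.

Lemma jn_mt_le m1 m2 a b : (m1 ⊔ a) ⊓ (m2 ⊔ b) ≤ (m1 ⊔ m2) ⊔ (a ⊓ b).
Proof.
  rewrite mtDr. apply jn_lub.
  - apply le_trans with m2; [apply le_mt_r|].
    apply le_trans with (m1 ⊔ m2); [apply le_jn_r | apply le_jn_l].
  - rewrite mtC, mtDr. apply jn_lub.
    + apply le_trans with m1; [apply le_mt_r|].
      apply le_trans with (m1 ⊔ m2); [apply le_jn_l | apply le_jn_l].
    + rewrite mtC. apply le_jn_r.
Qed.

Lemma dm_anti x y : x ≤ y -> dm L y ≤ dm L x.
Proof. intros H. apply le_jn. unfold le in H. now rewrite jnC, <- dmM, H. Qed.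

Lemma dmJ x y : dm L (x ⊔ y) = dm L x ⊓ dm L y.
Proof. now rewrite <- (dmK L (dm L x ⊓ dm L y)), dmM, !dmK. Qed.

Lemma dm0 : dm L (zero L) = one L.
Proof. apply le_one. rewrite <- (dmK L (one L)). apply dm_anti, le0. Qed.

Lemma dm1 : dm L (one L) = zero L.
Proof. now rewrite <- dm0, dmK. Qed.

Lemma le_st a x : a ⊓ x = zero L -> x ≤ st L a.
Proof. apply stP. Qed.

Lemma st_anti a b : a ≤ b -> st L b ≤ st L a.
Proof.
  intros Hab. apply le_st, le_zero.
  apply le_trans with (b ⊓ st L b).
  - apply mt_glb; [apply le_trans with a; [apply le_mt_l | exact Hab] | apply le_mt_r].
  - apply le_jn. rewrite (proj2 (stP L b (st L b)) (mt_idem _)). now rewrite jn0.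
Qed.

Definition chi a : L := st L (dm L a).

Lemma chi_mono a b : a ≤ b -> chi a ≤ chi b.
Proof. intros Hab. apply st_anti, dm_anti, Hab. Qed.

Lemma iter_chi_mono k a b : a ≤ b -> iter_dmst L k a ≤ iter_dmst L k b.
Proof. induction k; intros Hab; [exact Hab | apply chi_mono, IHk, Hab]. Qed.

Lemma iter_dmst_succ_r k a : iter_dmst L (S k) a = iter_dmst L k (chi a).
Proof. apply Nat.iter_succ_r. Qed.

Lemma jn_dm_chi a : a ⊔ dm L (chi a) = one L.
Proof.
  rewrite <- (dmK L (a ⊔ _)), dmJ, dmK.
  unfold chi. now rewrite (proj2 (stP L _ _) (mt_idem _)), dm0.
Qed.

Lemma dm_le_chi a c : a ⊔ c = one L -> dm L c ≤ chi a.
Proof. intros H. apply le_st. now rewrite <- dmJ, H, dm1. Qed.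

End Lattice.

Section PrimeIdeals.

Variable L : pmAlg.
Implicit Types a b c x y : L.
Implicit Types I J M : L -> Prop.

Definition is_ideal I : Prop :=
  I (zero L) /\ (forall a b, I b -> a ≤ b -> I a) /\ (forall a b, I a -> I b -> I (a ⊔ b)).

Definition ideal_join I J : L -> Prop := fun x => exists i j, I i /\ J j /\ x ≤ i ⊔ j.

Definition principal a : L -> Prop := fun x => x ≤ a.

Lemma principal_is_ideal a : is_ideal (principal a).
Proof.
  split; [apply le0 | split; intros x y].
  - intros ya xy. exact (le_trans _ _ _ _ xy ya).
  - apply jn_lub.
Qed.

Lemma ideal_join_is_ideal I J : is_ideal I -> is_ideal J -> is_ideal (ideal_join I J).
Proof.
  intros (I0 & _ & Ijn) (J0 & _ & Jjn). split; [|split].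
  - exists (zero L), (zero L). repeat split; auto using le0.
  - intros x y (i & j & Ii & Jj & Hy) Hxy. exists i, j. repeat split; eauto using le_trans.
  - intros x y (i1 & j1 & Ii1 & Jj1 & Hx) (i2 & j2 & Ii2 & Jj2 & Hy).
    exists (i1 ⊔ i2), (j1 ⊔ j2). repeat split; auto.
    apply jn_lub.
    + apply le_trans with (i1 ⊔ j1); [exact Hx | apply jn_mono; apply le_jn_l].
    + apply le_trans with (i2 ⊔ j2); [exact Hy | apply jn_mono; apply le_jn_r].
Qed.

Lemma ideal_join_l I J a : is_ideal J -> I a -> ideal_join I J a.
Proof. intros (J0 & _) Ia. exists a, (zero L). repeat split; auto using le_jn_l. Qed.

Lemma ideal_join_r I J a : is_ideal I -> J a -> ideal_join I J a.
Proof. intros (I0 & _) Ja. exists (zero L), a. repeat split; auto using le_jn_r. Qed.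

Lemma point_is_ideal (u : Point L) : is_ideal (proj1_sig u).
Proof. destruct (proj2_sig u) as (u0 & udown & ujn & _). split; auto. Qed.

Lemma maximal_ideal_prime M : is_ideal M -> ~ M (one L) ->
  (forall a, ~ M a -> ideal_join M (principal a) (one L)) -> prime_ideal L M.
Proof.
  intros (M0 & Mdown & Mjn) M1 Mmax. repeat split; auto.
  intros a b Mab. apply NNPP. intros [Ma Mb]%not_or_and.
  destruct (Mmax a Ma) as (m1 & a1 & Mm1 & a1a & H1).
  destruct (Mmax b Mb) as (m2 & b1 & Mm2 & b1b & H2).
  apply M1, Mdown with ((m1 ⊔ m2) ⊔ (a ⊓ b)); [apply Mjn; [apply Mjn |]; assumption|].
  apply le_trans with ((m1 ⊔ a) ⊓ (m2 ⊔ b)); [|apply jn_mt_le].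
  apply mt_glb.
  - apply le_trans with (m1 ⊔ a1); [exact H1 | apply jn_mono; [apply le_refl | exact a1a]].
  - apply le_trans with (m2 ⊔ b1); [exact H2 | apply jn_mono; [apply le_refl | exact b1b]].
Qed.

Definition proper_ideal_above I X : Prop :=
  is_ideal X /\ (forall a, I a -> X a) /\ ~ X (one L).

Lemma chain_union_proper_ideal I (F : (L -> Prop) -> Prop) :
  (forall X, F X -> (forall x, ~ X x) \/ proper_ideal_above I X) ->
  (forall X Y, F X -> F Y -> (forall a, X a -> Y a) \/ (forall a, Y a -> X a)) ->
  (forall x, ~ exists2 X, F X & X x) \/ proper_ideal_above I (fun x => exists2 X, F X & X x).
Proof.
  intros Fadm Ftot.
  destruct (classic (exists X x, F X /\ X x)) as [(X0 & x0 & FX0 & X0x0) | Fempty];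
    [right | left; intros x [X FX Xx]; eauto].
  assert (member : forall X x, F X -> X x -> proper_ideal_above I X).
  { intros X x FX Xx. destruct (Fadm X FX) as [E | H]; [destruct (E x Xx) | exact H]. }
  destruct (member X0 x0 FX0 X0x0) as ((X00 & _) & IX0 & _).
  split; [split; [|split] | split].
  - now exists X0.
  - intros a b [X FX Xb] ab. exists X; [exact FX|].
    destruct (member X b FX Xb) as ((_ & Xdown & _) & _). eauto.
  - intros a b [X1 FX1 X1a] [X2 FX2 X2b].
    destruct (Ftot X1 X2 FX1 FX2) as [H12 | H21].
    + exists X2; [exact FX2|]. destruct (member X2 b FX2 X2b) as ((_ & _ & X2jn) & _). auto.
    + exists X1; [exact FX1|]. destruct (member X1 a FX1 X1a) as ((_ & _ & X1jn) & _). auto.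
  - intros a Ia. exists X0; auto.
  - intros [X FX X1]. destruct (member X _ FX X1) as (_ & _ & Hn). auto.
Qed.

(* Zorn's lemma is applied to the proper ideals above I together with the empty set, so that
   the union of the empty chain is also admissible. *)
Lemma ideal_extends_to_point I : is_ideal I -> ~ I (one L) ->
  exists u : Point L, forall a, I a -> a ∈ u.
Proof.
  intros HI I1.
  destruct (classical_sets.Zorn_bigcup
              (P := fun X => (forall x, ~ X x) \/ proper_ideal_above I X))
    as (M & [Mempty | (HM & IM & M1)] & Mmax).
  - intros F Fadm Ftot. exact (chain_union_proper_ideal I F Fadm Ftot).
  - pose proof HI as (I0 & _).
    exfalso. apply (Mmax I).
    + split; [intros x Mx; destruct (Mempty x Mx) | intros IM; apply (Mempty _ (IM _ I0))].
    + right. split; [exact HI | split; auto].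
  - assert (prime : prime_ideal L M).
    { apply maximal_ideal_prime; auto. intros a Ma. apply NNPP; intros H.
      apply (Mmax (ideal_join M (principal a))).
      - split; [intros x Mx; apply ideal_join_l; auto using principal_is_ideal|].
        intros Hsub. apply Ma, Hsub, ideal_join_r; [exact HM | apply le_refl].
      - right. split; [apply ideal_join_is_ideal; auto using principal_is_ideal|].
        split; [intros x Ix; apply ideal_join_l; auto using principal_is_ideal | exact H]. }
    now exists (exist _ M prime).
Qed.

Lemma separate_ideals I J : is_ideal I -> is_ideal J ->
  (exists i j, I i /\ J j /\ i ⊔ j = one L)
  \/ (exists u : Point L, (forall a, I a -> a ∈ u) /\ (forall a, J a -> a ∈ u)).
Proof.
  intros HI HJ. destruct (classic (ideal_join I J (one L))) as [(i & j & Ii & Jj & H) | H].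
  - left. exists i, j. auto using le_one.
  - right. destruct (ideal_extends_to_point (ideal_join I J)) as [u Hu];
      auto using ideal_join_is_ideal.
    exists u. split; intros a Ha; apply Hu; auto using ideal_join_l, ideal_join_r.
Qed.

End PrimeIdeals.

Section Duality.

Variable L : pmAlg.
Implicit Types a b c x y : L.
Implicit Types p q u v w : Point L.

Lemma pt_down u a b : b ∈ u -> a ≤ b -> a ∈ u.
Proof. destruct (point_is_ideal L u) as (_ & Hdown & _). apply Hdown. Qed.

Lemma pt_jn u a b : a ∈ u -> b ∈ u -> a ⊔ b ∈ u.
Proof. destruct (point_is_ideal L u) as (_ & _ & Hjn). apply Hjn. Qed.

Lemma pt_prime u a b : a ⊓ b ∈ u -> a ∈ u \/ b ∈ u.
Proof. destruct (proj2_sig u) as (_ & _ & _ & _ & Hprime). apply Hprime. Qed.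

Lemma pt_jn_one u a b : a ⊔ b = one L -> a ∈ u -> b ∈ u -> False.
Proof.
  intros Hab Ha Hb. destruct (proj2_sig u) as (_ & _ & _ & Hone & _).
  apply Hone. rewrite <- Hab. now apply pt_jn.
Qed.

Lemma zeta_prime u : prime_ideal L (fun a => ~ dm L a ∈ u).
Proof.
  destruct (proj2_sig u) as (u0 & udown & ujn & u1 & uprime).
  split; [|split; [|split; [|split]]].
  - now rewrite dm0.
  - intros a b Hb Hab Ha. apply Hb, udown with (dm L a); [exact Ha | now apply dm_anti].
  - intros a b Ha Hb Hab. rewrite dmJ in Hab. now destruct (uprime _ _ Hab).
  - rewrite dm1. intros H. exact (H u0).
  - intros a b Hab. rewrite dmM in Hab. apply NNPP. intros [Ha Hb]%not_or_and.
    apply Hab, ujn; now apply NNPP.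
Qed.

Definition zeta u : Point L := exist _ _ (zeta_prime u).

Lemma zeta_anti u v : pt_le L u v -> pt_le L (zeta v) (zeta u).
Proof. intros Huv a Ha Hu. exact (Ha (Huv _ Hu)). Qed.

Lemma zeta_zeta_le u : pt_le L (zeta (zeta u)) u.
Proof. intros a Ha. cbn in Ha. rewrite dmK in Ha. now apply NNPP. Qed.

Definition step v w : Prop := pt_le L (zeta w) v.

Lemma step_sym v w : step v w -> step w v.
Proof. intros Hvw a Ha. apply NNPP. intros Hw. apply Ha, Hvw. cbn. now rewrite dmK. Qed.

Lemma chi_step v w a : step v w -> a ∈ w -> chi L a ∈ v.
Proof.
  intros Hvw Ha. apply NNPP. intros Hchi.
  apply (pt_jn_one w a (dm L (chi L a)) (jn_dm_chi L a) Ha).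
  apply NNPP. intros H. exact (Hchi (Hvw _ H)).
Qed.

Lemma chi_char v a : ~ chi L a ∈ v <-> forall w, step v w -> ~ a ∈ w.
Proof.
  split; [intros Hchi w Hvw Ha; exact (Hchi (chi_step v w a Hvw Ha))|].
  intros Hsteps Hchi.
  destruct (separate_ideals L _ (principal L a) (point_is_ideal L (zeta v)) (principal_is_ideal L a))
    as [(i & j & Hi & Hj & Hij) | (w & Hw & Ha)].
  - apply Hi, pt_down with (chi L a); [exact Hchi|].
    apply le_trans with (chi L j); [apply dm_le_chi; now rewrite jnC | now apply chi_mono].
  - apply (Hsteps w); [apply step_sym; exact Hw | apply Ha, le_refl].
Qed.

(* Starting below [p] rather than at [p] changes no [reach (S k) p], since [step] is
   monotone in its first argument. *)
Fixpoint reach k p w : Prop :=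
  match k with
  | 0 => pt_le L w p
  | S k => exists v, reach k p v /\ step v w
  end.

Lemma iter_chi_char k u a : ~ iter_dmst L k a ∈ u <-> forall w, reach k u w -> ~ a ∈ w.
Proof.
  revert a; induction k as [|k IH]; intros a; cbn [reach].
  - split; [intros Hu w Hwu Hw; exact (Hu (Hwu _ Hw)) | intros H; apply (H u); intros b; auto].
  - rewrite iter_dmst_succ_r, IH. split.
    + intros H w (v & Hv & Hvw). exact (proj1 (chi_char v a) (H v Hv) w Hvw).
    + intros H v Hv. apply chi_char. intros w Hvw. apply H. now exists v.
Qed.

Definition chi_ideal p k : L -> Prop :=
  fun a => exists b, b ∈ zeta p /\ a ≤ iter_dmst L k b.

Lemma chi_ideal_is_ideal p k : is_ideal L (chi_ideal p k).
Proof.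
  destruct (point_is_ideal L (zeta p)) as (p0 & _ & pjn). split; [|split].
  - exists (zero L). split; [exact p0 | apply le0].
  - intros a b (c & Hc & Hbc) Hab. exists c. split; [exact Hc | now apply le_trans with b].
  - intros a b (c1 & Hc1 & H1) (c2 & Hc2 & H2). exists (c1 ⊔ c2). split; [now apply pjn|].
    apply jn_lub.
    + apply le_trans with (iter_dmst L k c1); [exact H1 | apply iter_chi_mono, le_jn_l].
    + apply le_trans with (iter_dmst L k c2); [exact H2 | apply iter_chi_mono, le_jn_r].
Qed.

Lemma reach_succ_iff k p w : reach (S k) p w <-> forall a, chi_ideal p k a -> a ∈ w.
Proof.
  revert w; induction k as [|k IH]; intros w; split.
  - intros (v & Hvp & Hvw) a (b & Hb & Hab). apply pt_down with b; [|exact Hab].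
    apply (step_sym v w Hvw), (zeta_anti v p Hvp), Hb.
  - intros H. exists p. split; [intros a; auto|].
    apply step_sym. intros b Hb. apply H. exists b. split; [exact Hb | apply le_refl].
  - intros (v & Hv & Hvw) a (b & Hb & Hab). apply pt_down with (iter_dmst L (S k) b); [|exact Hab].
    apply (chi_step w v); [now apply step_sym|].
    apply (proj1 (IH v) Hv). exists b. split; [exact Hb | apply le_refl].
  - intros H.
    destruct (separate_ideals L _ _ (chi_ideal_is_ideal p k) (point_is_ideal L (zeta w)))
      as [(h & c & (b & Hb & Hhb) & Hc & Hhc) | (v & Hv & Hw)].
    + exfalso. apply Hc, H. exists b. split; [exact Hb|].
      apply le_trans with (chi L h); [now apply dm_le_chi | now apply chi_mono].
    + exists v. split; [now apply IH | exact Hw].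
Qed.

Lemma reach_separated k p v : (forall w, reach (S k) p w -> ~ pt_le L v w) ->
  exists c, c ∈ v /\ forall w, reach (S k) p w -> ~ c ∈ w.
Proof.
  intros Hv.
  destruct (separate_ideals L _ _ (chi_ideal_is_ideal p k) (point_is_ideal L v))
    as [(h & c & Hh & Hc & Hhc) | (w & Hw & Hvw)].
  - exists c. split; [exact Hc|]. intros w Hreach Hcw.
    apply (pt_jn_one w h c Hhc); [now apply (reach_succ_iff k p w) | exact Hcw].
  - exfalso. apply (Hv w); [now apply reach_succ_iff | exact Hvw].
Qed.

Lemma reach_succ_of_le j p u w v : reach j p w -> pt_le L u w -> step u v -> reach (S j) p v.
Proof. intros Hw Huw Huv. exists w. split; [exact Hw | intros a Ha; exact (Huw _ (Huv _ Ha))]. Qed.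

Lemma reach_add2 j p v : reach j p v -> reach (S (S j)) p v.
Proof.
  intros Hv. exists (zeta v). split; [|intros a; auto].
  exists v. split; [exact Hv | apply zeta_zeta_le].
Qed.

Lemma reach_add_even i j p v : reach j p v -> reach (j + 2 * i) p v.
Proof.
  induction i as [|i IH]; intros Hv.
  - now rewrite Nat.mul_0_r, Nat.add_0_r.
  - replace (j + 2 * S i) with (S (S (j + 2 * i))) by lia. now apply reach_add2, IH.
Qed.

End Duality.

Section Stabilization.

Variables (L : pmAlg) (n : nat).
Hypothesis range_n : forall x : L,
  iter_dmst L n (x ⊓ st L (dm L x)) = iter_dmst L (S n) (x ⊓ st L (dm L x)).

(* With [x] avoiding every point reached in [n+1] or [n+2] steps, the element
   [y = x ⊓ chi x] avoids every point reached in [n+1] steps, so [chi^(n+1) y ∉ p];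
   by the range identity also [chi^(n+2) y ∉ p], which [x ∈ v] contradicts. *)
Lemma reach_stabilizes p v : reach L (S (S (S n))) p v ->
  exists w, (reach L (S n) p w \/ reach L (S (S n)) p w) /\ pt_le L v w.
Proof.
  intros Hv. apply NNPP. intros Hno.
  destruct (reach_separated L n p v) as (c1 & Hc1 & Hc1w).
  { intros w Hw Hvw. apply Hno. eauto. }
  destruct (reach_separated L (S n) p v) as (c2 & Hc2 & Hc2w).
  { intros w Hw Hvw. apply Hno. eauto. }
  set (x := c1 ⊔ c2).
  assert (Hx1 : forall w, reach L (S n) p w -> ~ x ∈ w).
  { intros w Hw Hx. apply (Hc1w w Hw), pt_down with x; [exact Hx | apply le_jn_l]. }
  assert (Hx2 : forall w, reach L (S (S n)) p w -> ~ x ∈ w).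
  { intros w Hw Hx. apply (Hc2w w Hw), pt_down with x; [exact Hx | apply le_jn_r]. }
  assert (Hp : ~ iter_dmst L (S n) (x ⊓ chi L x) ∈ p).
  { apply iter_chi_char. intros w Hw Hy. destruct (pt_prime L w _ _ Hy) as [Hx | Hchi].
    - exact (Hx1 w Hw Hx).
    - revert Hchi. apply chi_char. intros w' Hww'. apply Hx2. now exists w. }
  assert (Hrange : iter_dmst L (S n) (x ⊓ chi L x) = iter_dmst L (S (S n)) (x ⊓ chi L x))
    by exact (f_equal (chi L) (range_n x)).
  rewrite Hrange in Hp.
  destruct Hv as (w & Hw & Hwv).
  assert (Hchi : ~ chi L x ∈ w).
  { intros Hchi. apply (proj1 (iter_chi_char L _ _ _) Hp w Hw).
    apply pt_down with (chi L x); [exact Hchi | apply le_mt_r]. }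
  apply (proj1 (chi_char L w x) Hchi v Hwv), pt_jn; assumption.
Qed.

Lemma reach_shift_bounded i p v : reach L (S (S n) + i) p v ->
  reach L (S (S n)) p v \/ reach L (S (S (S n))) p v.
Proof.
  revert v; induction i as [|i IH]; intros v Hv.
  - left. now rewrite Nat.add_0_r in Hv.
  - rewrite Nat.add_succ_r in Hv. destruct Hv as (u & Hu & Huv).
    destruct (IH u Hu) as [Hu2 | Hu3]; [right; now exists u|].
    destruct (reach_stabilizes p u Hu3) as (w & [Hw | Hw] & Huw).
    + left. exact (reach_succ_of_le L _ p u w v Hw Huw Huv).
    + right. exact (reach_succ_of_le L _ p u w v Hw Huw Huv).
Qed.

Lemma reach_bounded j p v : reach L j p v ->
  reach L (S (S n)) p v \/ reach L (S (S (S n))) p v.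
Proof.
  intros Hv. apply (reach_shift_bounded (j + S (S n))).
  replace (S (S n) + (j + S (S n))) with (j + 2 * S (S n)) by lia.
  now apply reach_add_even.
Qed.

End Stabilization.

Section Components.

Variable L : pmAlg.
Implicit Types p q u v w : Point L.

Lemma path_connected_sym u v : path_connected L u v -> path_connected L v u.
Proof.
  induction 1 as [u v [Huv | Hvu] | | u v w _ IHuv _ IHvw].
  - apply rt_step. now right.
  - apply rt_step. now left.
  - apply rt_refl.
  - now apply rt_trans with v.
Qed.

Lemma path_connected_zeta u v : path_connected L u v -> path_connected L (zeta L u) (zeta L v).
Proof.
  induction 1 as [u v [Huv | Hvu] | | u v w _ IHuv _ IHvw].
  - apply rt_step. right. now apply zeta_anti.
  - apply rt_step. left. now apply zeta_anti.
  - apply rt_refl.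
  - now apply rt_trans with (zeta L v).
Qed.

Lemma path_connected_reach p q : path_connected L p q -> exists j, reach L j p q.
Proof.
  intros Hpq. induction Hpq as [| u v _ (j & Hu) Huv] using clos_refl_trans_ind_left.
  - exists 0. intros a; auto.
  - assert (Hlow : exists w, pt_le L w u /\ pt_le L w v)
      by (destruct Huv; [exists u | exists v]; split; auto; intros a; auto).
    destruct Hlow as (w & Hwu & Hwv). exists (S (S j)), (zeta L w). split.
    + exists u. split; [exact Hu|]. intros a Ha. exact (Hwu _ (zeta_zeta_le L w _ Ha)).
    + now apply zeta_anti.
Qed.

Lemma reach_path_connected j p u v : reach L j p u -> reach L j p v -> path_connected L u v.
Proof.
  revert u v; induction j as [|j IH]; intros u v Hu Hv.
  - apply rt_trans with p; apply rt_step; [now left | now right].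
  - destruct Hu as (x & Hx & Hxu), Hv as (y & Hy & Hyv).
    apply rt_trans with (zeta L x); [apply rt_step; right; now apply step_sym|].
    apply rt_trans with (zeta L y); [now apply path_connected_zeta, IH|].
    apply rt_step. left. now apply step_sym.
Qed.

Lemma order_component_iff C p : order_component L C -> C p ->
  forall q, C q <-> path_connected L p q.
Proof.
  intros (Hconn & Hmax) Cp q. split; [now apply Hconn|].
  apply Hmax; [intros u Cu; now apply Hconn|].
  intros u v Hu Hv. apply rt_trans with p; [now apply path_connected_sym | exact Hv].
Qed.

Lemma is_closed_ext (U V : Point L -> Prop) :
  (forall p, U p <-> V p) -> is_closed L U -> is_closed L V.
Proof.
  intros HUV HU q Hq. destruct (HU q) as (l & Hl & Hnb); [now rewrite HUV|].
  exists l. split; [exact Hl|]. intros q' Hq'. rewrite <- HUV. now apply Hnb.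
Qed.

Lemma is_closed_empty (U : Point L -> Prop) : (forall p, ~ U p) -> is_closed L U.
Proof. intros HU q _. exists nil. split; [constructor | intros q' _; apply HU]. Qed.

Lemma is_closed_or (U V : Point L -> Prop) :
  is_closed L U -> is_closed L V -> is_closed L (fun p => U p \/ V p).
Proof.
  intros HU HV q Hq. apply not_or_and in Hq as [HqU HqV].
  destruct (HU q HqU) as (l1 & Hl1 & Hnb1), (HV q HqV) as (l2 & Hl2 & Hnb2).
  exists (l1 ++ l2). split; [now apply Forall_app|].
  intros q' [Hq'1 Hq'2]%Forall_app [Hq'U | Hq'V]; [exact (Hnb1 q' Hq'1 Hq'U) | exact (Hnb2 q' Hq'2 Hq'V)].
Qed.

Lemma is_closed_above (H : L -> Prop) : is_closed L (fun u => forall a, H a -> a ∈ u).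
Proof.
  intros q Hq. apply not_all_ex_not in Hq as [a Ha]. apply imply_to_and in Ha as [Ha Hqa].
  exists ((a, true) :: nil). split; [now constructor|].
  intros q' Hq' Hall. inversion Hq' as [| ? ? Hq'a]. exact (Hq'a (Hall a Ha)).
Qed.

Lemma reach_succ_closed k p : is_closed L (reach L (S k) p).
Proof.
  apply is_closed_ext with (fun w => forall a, chi_ideal L p k a -> a ∈ w).
  - intros w. symmetry. apply reach_succ_iff.
  - apply is_closed_above.
Qed.

(* A closed set whose points are pairwise joined by paths lies inside or outside [C]. *)
Lemma order_component_meet_closed C R : order_component L C -> is_closed L R ->
  (forall u v, R u -> R v -> path_connected L u v) -> is_closed L (fun u => R u /\ C u).
Proof.
  intros HC HR Hconn. destruct (classic (exists u, R u /\ C u)) as [(u & Ru & Cu) | Hno].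
  - apply is_closed_ext with R; [|exact HR]. intros v. split; [|tauto].
    intros Rv. split; [exact Rv|]. apply (order_component_iff C u HC Cu), Hconn; assumption.
  - apply is_closed_empty. intros v Hv. apply Hno. now exists v.
Qed.

End Components.

Theorem theorem4p1 (n : nat) (L : pmAlg) (HL : in_Mn n L)
  (C : Point L -> Prop) (HC : order_component L C) :
  is_closed L C.
Proof.
  destruct (classic (exists p, C p)) as [(p & Cp) | Cempty].
  2: { apply is_closed_empty. intros p Cp. apply Cempty. now exists p. }
  apply is_closed_ext with
    (fun u => (reach L (S (S n)) p u /\ C u) \/ (reach L (S (S (S n))) p u /\ C u)).
  - intros u. split; [tauto|]. intros Cu.
    destruct (path_connected_reach L p u (proj1 (order_component_iff L C p HC Cp u) Cu)) as (j & Hj).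
    destruct (reach_bounded L n (proj2 HL) j p u Hj); tauto.
  - apply is_closed_or; apply order_component_meet_closed;
      auto using reach_succ_closed; intros u v; apply reach_path_connected.
Qed.
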